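(* Let $n,d,m$ be positive integers with $d$ odd and $\delta=n/d$ a positive integer, and let $X\in\mathbb{R}^{m\times n}$ be any matrix whose $k$-th row is the data vector $\mathbf{x}^{(0,k)}$, $k=1,\dots,m$. Consider the 1-hidden layer treelike committee machine sign perceptron network $A([n,d,1];\mathrm{sign})$, and the data set $(\mathbf{x}^{(0,k)},1)_{k=1}^m$ (all labels equal to $1$). For $j=1,\dots,d$ let $\mathcal{S}^{(j)}=\{(j-1)\delta+1,\dots,j\delta\}$ and $X^{(j)}=X_{:,\mathcal{S}^{(j)}}\in\mathbb{R}^{m\times\delta}$. Define $$f_{rp}(X)=\frac{1}{\sqrt n}\min_{\mathbf{z}^{(j)}\in\mathbb{R}^\delta,\ \|\mathbf{z}^{(j)}\|_2=1\ (1\le j\le d),\ Q\in\mathbb{R}^{m\times d}}\ \max_{\Lambda\in\mathbb{R}^{m\times d}}\Big(\|\mathbf{1}-\mathrm{sign}(\mathrm{sign}(Q)\mathbf{1})\|_2+\sum_{j=1}^d(\Lambda_{:,j})^TX^{(j)}\mathbf{z}^{(j)}-\mathrm{tr}(\Lambda^TQ)\Big).$$ If $f_{rp}(X)>0$, then the data set $(\mathbf{x}^{(0,k)},1)_{k=1}^m$ cannot be properly memorized by the network.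
   Context: The network $A([n,d,1];\mathrm{sign})$ (treelike committee machine, TCM): an input $\mathbf{x}\in\mathbb{R}^n$ is mapped to the output $\mathrm{sign}(\mathbf{1}^T\mathrm{sign}(W\mathbf{x}))$, where $\mathbf{1}$ is the all-ones vector, $\mathrm{sign}$ acts componentwise, and $W\in\mathbb{R}^{d\times n}$ is a weight matrix with treelike sparsity: the nonzero entries of row $j$ of $W$ lie only in the columns $\mathcal{S}^{(j)}=\{(j-1)\delta+1,\dots,j\delta\}$. The data set $(\mathbf{x}^{(0,k)},y^{(0,k)})_{k=1}^m$ is properly memorized if there exists such a $W$ with $\mathrm{sign}(\mathbf{1}^T\mathrm{sign}(W\mathbf{x}^{(0,k)}))=y^{(0,k)}$ for all $k$. For a matrix $Q$, $\mathrm{sign}(Q)$ is applied entrywise and $\mathrm{sign}(Q)\mathbf{1}$ is the vector of row sums of $\mathrm{sign}(Q)$; $\Lambda_{:,j}$ denotes the $j$-th column of $\Lambda$. *)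

From HB Require Import structures.
From mathcomp Require Import all_boot all_order all_algebra.
From mathcomp Require Import boolp classical_sets reals constructive_ereal ereal.
Set Implicit Arguments. Unset Strict Implicit. Unset Printing Implicit Defensive.
Import Order.TTheory GRing.Theory Num.Theory.
Local Open Scope ring_scope.
Local Open Scope classical_set_scope.

(* sign convention: sgn x = 1 if x > 0, and -1 otherwise (so sgn 0 = -1) *)
Definition sgn {R : realType} (x : R) : R := if 0 < x then 1 else -1.

(* Index (j-1)*delta + i (0-based: j*delta + i) of block j, position i. *)
Lemma blk_idx_proof (d dl : nat) (j : 'I_d) (i : 'I_dl) : (j * dl + i < d * dl)%N.
Proof.
have Hi := ltn_ord i; have Hj := ltn_ord j.
apply: (leq_trans (_ : _ < j * dl + dl)%N); first by rewrite ltn_add2l.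
by rewrite -[(j * dl + dl)%N]mulSnr leq_mul2r Hj orbT.
Qed.
Definition blk_idx (d dl : nat) (j : 'I_d) (i : 'I_dl) : 'I_(d * dl) :=
  Ordinal (blk_idx_proof j i).

Definition blockX {R : realType} (m d dl : nat) (X : 'M[R]_(m, d * dl)) (j : 'I_d)
  : 'M[R]_(m, dl) := \matrix_(k < m, i < dl) X k (blk_idx j i).

Definition treelike {R : realType} (d dl : nat) (W : 'M[R]_(d, d * dl)) : Prop :=
  forall (j : 'I_d) (c : 'I_(d * dl)), (forall i : 'I_dl, c != blk_idx j i) -> W j c = 0.

Definition tcm_out {R : realType} (d dl : nat) (W : 'M[R]_(d, d * dl))
  (x : 'cV[R]_(d * dl)) : R :=
  sgn (\sum_(j < d) sgn ((W *m x) j 0)).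

Definition properly_memorized {R : realType} (m d dl : nat)
  (X : 'M[R]_(m, d * dl)) (y : 'I_m -> R) : Prop :=
  exists W : 'M[R]_(d, d * dl), treelike W /\
    forall k : 'I_m, tcm_out W (row k X)^T = y k.

Definition sign_err {R : realType} (m d : nat) (Q : 'M[R]_(m, d)) : R :=
  Num.sqrt (\sum_(k < m) (1 - sgn (\sum_(j < d) sgn (Q k j))) ^+ 2).

Definition frp_obj {R : realType} (m d dl : nat) (X : 'M[R]_(m, d * dl))
  (z : 'I_d -> 'cV[R]_dl) (Q L : 'M[R]_(m, d)) : R :=
  sign_err Q
  + \sum_(j < d) ((col j L)^T *m blockX X j *m z j) 0 0
  - \tr (L^T *m Q).

Definition unit_norm {R : realType} (dl : nat) (v : 'cV[R]_dl) : Prop :=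
  Num.sqrt (\sum_(i < dl) v i 0 ^+ 2) = 1.

(* f_rp(X), with min/max read as inf/sup in the extended reals *)
Definition f_rp {R : realType} (m d dl : nat) (X : 'M[R]_(m, d * dl)) : \bar R :=
  ((Num.sqrt ((d * dl)%:R : R))^-1)%:E *
  ereal_inf [set e | exists (z : 'I_d -> 'cV[R]_dl) (Q : 'M[R]_(m, d)),
      (forall j, unit_norm (z j)) /\
      e = ereal_sup [set (frp_obj X z Q L)%:E | L in [set: 'M[R]_(m, d)]]].

(* If a treelike W memorizes X with all labels 1, normalize the block j of
   row j of W to a unit vector z^(j) (any unit vector if that block vanishes)
   and take Q := [X^(j) z^(j)]_j.  Every hidden unit that fires positively on
   x^(0,k) gives a positive entry Q_kj, so sign(sign(Q)1) = 1 and the sign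
   error vanishes; by the choice of Q the Lagrangian terms cancel for every
   Lambda.  Hence the inner maximum is 0 and f_rp(X) <= 0. *)
From HB Require Import structures.
From mathcomp Require Import all_boot all_order all_algebra.
From mathcomp Require Import boolp classical_sets reals constructive_ereal ereal.
Set Implicit Arguments. Unset Strict Implicit. Unset Printing Implicit Defensive.
Import Order.TTheory GRing.Theory Num.Theory.
Local Open Scope ring_scope.

Section Sign.
Variable R : realType.

Lemma sgn_eq1 (a : R) : (sgn a == 1) = (0 < a).
Proof.
rewrite /sgn; case: ifP => _; rewrite ?eqxx //.
by rewrite lt_eqF // (lt_trans ltrN10 ltr01).
Qed.

Lemma sgn_le (a b : R) : (0 < b -> 0 < a) -> sgn b <= sgn a.
Proof.
move=> hba; rewrite /sgn; case: ifP => [/hba -> // | _].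
by case: ifP => _; rewrite ?lexx // ltW // (lt_trans ltrN10 ltr01).
Qed.

Lemma sum_sgn_le (d : nat) (a b : 'I_d -> R) :
  (forall j, 0 < b j -> 0 < a j) -> \sum_j sgn (b j) <= \sum_j sgn (a j).
Proof. by move=> hab; apply: ler_sum => j _; apply/sgn_le/hab. Qed.

End Sign.

Section Blocks.
Variables (R : realType) (m d dl : nat).

Lemma blk_idx_inj (j : 'I_d) : injective (@blk_idx d dl j).
Proof. by move=> i i' /(congr1 val) /= /addnI /val_inj. Qed.

Definition block_weights (W : 'M[R]_(d, d * dl)) (j : 'I_d) : 'cV[R]_dl :=
  \col_i W j (blk_idx j i).

Lemma treelike_mulmx_row (X : 'M[R]_(m, d * dl)) (W : 'M[R]_(d, d * dl))
    (k : 'I_m) (j : 'I_d) :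
  treelike W -> (W *m (row k X)^T) j 0 = (blockX X j *m block_weights W j) k 0.
Proof.
move=> hW; rewrite !mxE.
pose S := [set blk_idx j i | i : 'I_dl].
rewrite (bigID (mem S)) /= [X in _ + X]big1 ?addr0; last first.
  move=> c cNS; rewrite hW ?mul0r // => i.
  by apply: contraNneq cNS => ->; apply: imset_f.
rewrite big_imset /=; last by move=> i i' _ _; apply: blk_idx_inj.
by apply: eq_bigr => i _; rewrite !mxE mulrC.
Qed.

Definition block_proj (X : 'M[R]_(m, d * dl)) (z : 'I_d -> 'cV[R]_dl)
  : 'M[R]_(m, d) := \matrix_(k, j) (blockX X j *m z j) k 0.

Lemma frp_obj_block_proj (X : 'M[R]_(m, d * dl)) (z : 'I_d -> 'cV[R]_dl)
    (L : 'M[R]_(m, d)) :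
  frp_obj X z (block_proj X z) L = sign_err (block_proj X z).
Proof.
rewrite /frp_obj /mxtrace -addrA; apply/eqP; rewrite addrC -subr_eq0 addrK.
rewrite subr_eq0; apply/eqP; apply: eq_bigr => j _.
by rewrite -mulmxA !mxE; apply: eq_bigr => k _; rewrite !mxE.
Qed.

Local Open Scope classical_set_scope.

Lemma f_rp_le_sign_err (X : 'M[R]_(m, d * dl)) (z : 'I_d -> 'cV[R]_dl) :
  (forall j, unit_norm (z j)) ->
  (f_rp X <= ((Num.sqrt (d * dl)%:R)^-1 * sign_err (block_proj X z))%:E)%E.
Proof.
move=> hz; rewrite EFinM; apply: lee_wpmul2l; first by rewrite lee_fin invr_ge0.
apply: ereal_inf_lbound; exists z, (block_proj X z); split => //.
rewrite -[LHS]ereal_sup1; congr ereal_sup; apply/seteqP; split => x /=.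
  by move=> ->; exists 0 => //; rewrite frp_obj_block_proj.
by case=> L _ <-; rewrite frp_obj_block_proj.
Qed.

End Blocks.

Lemma sign_err_eq0 (R : realType) (m d : nat) (Q : 'M[R]_(m, d)) :
  (forall k, 0 < \sum_j sgn (Q k j)) -> sign_err Q = 0.
Proof.
move=> hQ; rewrite /sign_err big1 ?sqrtr0 // => k _.
by move: (hQ k); rewrite -sgn_eq1 => /eqP ->; rewrite subrr expr0n.
Qed.

Lemma unit_norm_direction (R : realType) (dl : nat) (v : 'cV[R]_dl) :
  (0 < dl)%N -> exists z, unit_norm z /\ exists2 c, 0 <= c & v = c *: z.
Proof.
move=> hdl; pose c := Num.sqrt (\sum_i v i 0 ^+ 2).
have c_ge0 : 0 <= c by rewrite sqrtr_ge0.
have [c0 | cN0] := eqVneq c 0.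
  pose i0 : 'I_dl := Ordinal hdl.
  exists (delta_mx i0 0); split.
    rewrite /unit_norm (bigD1 i0) //= big1 ?addr0; first by rewrite mxE !eqxx expr1n sqrtr1.
    by move=> i /negbTE iNi0; rewrite mxE iNi0 expr0n.
  exists 0 => //; rewrite scale0r; apply/matrixP => i j; rewrite (ord1 j) mxE.
  have sum_ge0 : 0 <= \sum_i v i 0 ^+ 2 by rewrite sumr_ge0 // => ? _; rewrite sqr_ge0.
  have sum0 : \sum_i v i 0 ^+ 2 = 0.
    by apply/eqP; rewrite eq_le sum_ge0 andbT -sqrtr_eq0 -/c c0.
  by apply/eqP; rewrite -sqrf_eq0; apply/eqP/(psumr_eq0P (fun i _ => sqr_ge0 _) sum0).
have c_gt0 : 0 < c by rewrite lt_def cN0.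
exists (c^-1 *: v); split; last by exists c => //; rewrite scalerA divff ?scale1r.
rewrite /unit_norm; under eq_bigr => i _ do rewrite mxE exprMn.
by rewrite -mulr_sumr sqrtrM ?sqr_ge0 // sqrtr_sqr ger0_norm ?invr_ge0 // mulVf.
Qed.

Theorem lemma1 (R : realType) (n d dl m : nat)
  (hn : (0 < n)%N) (hd : (0 < d)%N) (hdodd : odd d) (hdl : (0 < dl)%N)
  (hm : (0 < m)%N) (hndl : n = (d * dl)%N) (X : 'M[R]_(m, d * dl)) :
  (0 < f_rp X)%E -> ~ properly_memorized X (fun _ => 1).
Proof.
move=> f_rp_gt0 [W [treeW memW]].
have [z zP] := choice (fun j => unit_norm_direction (block_weights W j) hdl).
have hidden_pos k j : 0 < (W *m (row k X)^T) j 0 -> 0 < block_proj X z k j.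
  rewrite treelike_mulmx_row //; have [_ [c c_ge0 ->]] := zP j.
  rewrite -scalemxAr mxE [block_proj _ _ _ _]mxE.
  move: c_ge0; rewrite le_eqVlt => /predU1P [<- | c_gt0]; first by rewrite mul0r ltxx.
  by rewrite pmulr_rgt0.
have err0 : sign_err (block_proj X z) = 0.
  apply: sign_err_eq0 => k; apply: lt_le_trans (sum_sgn_le (hidden_pos k)).
  by move/eqP: (memW k); rewrite sgn_eq1.
have := f_rp_le_sign_err X (fun j => (zP j).1).
by rewrite err0 mulr0 leNgt f_rp_gt0.
Qed.
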